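(* Let $\mathcal{F}$ be a hypergraph and $\mathcal{M}$ a matching of $\mathcal{F}$. Then $\mathcal{M}$ is a maximum matching if and only if there is no $\mathcal{M}$-augmenting set in $\mathcal{F}$.
   Context: A hypergraph (set system) $\mathcal{F}$ is a finite collection of distinct subsets of a vertex set (no uniformity is assumed). A matching is a collection of pairwise disjoint members of $\mathcal{F}$; it is maximum if no matching of $\mathcal{F}$ has more members. For $\mathcal{C}\subseteq\mathcal{F}$, write $X_{\mathcal{C}}=\bigcup_{A\in\mathcal{C}}A$ and $\mathcal{C}_x=\{A\in\mathcal{C}:x\in A\}$. Given a matching $\mathcal{M}$, a subfamily $\mathcal{C}\subseteq\mathcal{F}$ is an $\mathcal{M}$-augmenting set if: (1) $|\mathcal{M}\cap\mathcal{C}|<|\mathcal{C}\setminus\mathcal{M}|$; (2) whenever $B\in\mathcal{M}$ and $B\cap A\neq\emptyset$ for some $A\in\mathcal{C}$, then $B\in\mathcal{C}$; (3) $|\mathcal{C}_x\setminus\mathcal{M}|\leq 1$ for every $x\in X_{\mathcal{C}}$ (i.e., the members of $\mathcal{C}\setminus\mathcal{M}$ are pairwise disjoint). *)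

From mathcomp Require Import all_boot.
Set Implicit Arguments. Unset Strict Implicit. Unset Printing Implicit Defensive.

(* A hypergraph on a finite vertex set T is a set F : {set {set T}} of
   distinct subsets of T. *)

Definition is_matching (T : finType) (F M : {set {set T}}) : Prop :=
  M \subset F /\
  (forall A B, A \in M -> B \in M -> A != B -> [disjoint A & B]).

Definition is_maximum_matching (T : finType) (F M : {set {set T}}) : Prop :=
  is_matching F M /\ (forall N, is_matching F N -> #|N| <= #|M|).

Definition XC (T : finType) (C : {set {set T}}) : {set T} := \bigcup_(A in C) A.

Definition Cx (T : finType) (C : {set {set T}}) (x : T) : {set {set T}} :=
  [set A in C | x \in A].

Definition is_augmenting (T : finType) (F M C : {set {set T}}) : Prop :=
  [/\ C \subset F,
      #|M :&: C| < #|C :\: M|,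
      (forall B A, B \in M -> A \in C -> B :&: A != set0 -> B \in C)
    & (forall x, x \in XC C -> #|Cx C x :\: M| <= 1)].

(* If C is M-augmenting, then M with the members of C inside M swapped for
   those of C outside M is a matching: condition (3) makes C \ M pairwise
   disjoint, and condition (2) keeps C \ M away from the untouched part M \ C.
   By (1) it is larger than M.  Conversely, if N is a larger matching, the
   symmetric difference of N and M is M-augmenting. *)

From mathcomp Require Import all_boot zify.

Section Augmenting.

Context {T : finType}.
Implicit Types F M N C : {set {set T}}.

Lemma is_matchingE F M : is_matching F M <-> M \subset F /\ trivIset M.
Proof. by split=> -[MF tM]; split=> //; apply/trivIsetP. Qed.

Lemma trivIset_setD_Cx M C :
  (forall x, x \in XC C -> #|Cx C x :\: M| <= 1) <-> trivIset (C :\: M).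
Proof.
split=> [le1 | /trivIsetP tCM x _].
- apply/trivIsetP=> A B ACM BCM neqAB; rewrite -setI_eq0.
  apply/set0Pn=> -[x /setIP[xA xB]]; move/eqP: neqAB; apply.
  have xXC : x \in XC C by apply/bigcupP; exists A => //; case/setDP: ACM.
  move: ACM BCM; rewrite !inE => /andP[AM AC] /andP[BM BC].
  by apply: (card_le1_eqP (le1 x xXC)); rewrite !inE ?AM ?AC ?BM ?BC.
- apply/card_le1_eqP=> A B; rewrite !inE => /and3P[AM AC xA] /and3P[BM BC xB].
  apply/eqP; apply: contraT => neqAB.
  have ACM : A \in C :\: M by rewrite inE AM.
  have BCM : B \in C :\: M by rewrite inE BM.
  by rewrite (disjointFl (tCM B A BCM ACM neqAB) xA) in xB.
Qed.

Lemma disjoint_cover_setD {M C} :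
  (forall B A, B \in M -> A \in C -> B :&: A != set0 -> B \in C) ->
  [disjoint cover (M :\: C) & cover (C :\: M)].
Proof.
move=> closedC; rewrite -setI_eq0; apply/set0Pn=> -[x /setIP[]].
case/bigcupP=> B /setDP[BM BnC] xB /bigcupP[A /setDP[AC _] xA].
by rewrite (closedC B A) // in BnC; apply/set0Pn; exists x; rewrite inE xB xA.
Qed.

Lemma card_symdiff M C : #|(M :\: C) :|: (C :\: M)| = #|M :\: C| + #|C :\: M|.
Proof.
rewrite cardsU; suff -> : (M :\: C) :&: (C :\: M) = set0 by rewrite cards0 subn0.
by apply/setP=> A; rewrite !inE; case: (A \in M); case: (A \in C).
Qed.

Lemma augment_matching {F M C} :
  is_matching F M -> is_augmenting F M C ->
  is_matching F ((M :\: C) :|: (C :\: M)) /\ #|M| < #|(M :\: C) :|: (C :\: M)|.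
Proof.
move=> /is_matchingE[MF tM] [CF ltMC closedC /trivIset_setD_Cx tCM].
split; last by rewrite card_symdiff -(cardsID C M); lia.
apply/is_matchingE; split.
- by rewrite subUset !(subset_trans (subsetDl _ _)).
- exact: trivIsetU (trivIsetD C tM) tCM (disjoint_cover_setD closedC).
Qed.

Lemma symdiff_augmenting {F M N} :
  is_matching F M -> is_matching F N -> #|M| < #|N| ->
  is_augmenting F M ((N :\: M) :|: (M :\: N)).
Proof.
move=> [MF dM] [NF dN] ltMN.
have tN : trivIset N by apply/trivIsetP.
have MI : M :&: ((N :\: M) :|: (M :\: N)) = M :\: N.
  by apply/setP=> A; rewrite !inE; case: (A \in M); case: (A \in N).
have MD : ((N :\: M) :|: (M :\: N)) :\: M = N :\: M.
  by apply/setP=> A; rewrite !inE; case: (A \in M); case: (A \in N).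
split.
- by rewrite subUset !(subset_trans (subsetDl _ _)).
- by rewrite MI MD; move: ltMN; rewrite -(cardsID N M) -(cardsID M N) setIC; lia.
- move=> B A BM AC; rewrite setI_eq0 !inE BM andbT; case: (boolP (B \in N)) => //= BN.
  case/setUP: AC => [/setDP[AN AnM] | /setDP[AM AnN]].
  + by rewrite dN //; apply: contraNneq AnM => <-.
  + by rewrite dM //; apply: contraNneq AnN => <-.
- by apply/trivIset_setD_Cx; rewrite MD; apply: trivIsetD.
Qed.

End Augmenting.

Theorem lemma1 (T : finType) (F M : {set {set T}}) :
  is_matching F M ->
  (is_maximum_matching F M <-> ~ (exists C, is_augmenting F M C)).
Proof.
move=> matM; split.
- move=> [_ maxM] [C augC]; have [matN ltMN] := augment_matching matM augC.
  by have := maxM _ matN; rewrite leqNgt ltMN.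
- move=> noC; split=> // N matN; rewrite leqNgt; apply/negP=> ltMN.
  by apply: noC; exists ((N :\: M) :|: (M :\: N)); apply: symdiff_augmenting.
Qed.
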